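(* Let $p,q\ge0$ with $p+q<1$, $0<\theta<1$, and $k<n$ positive integers. Define \[ m_{\mathrm{COMP}}=\min_{\alpha,d}\max\left\{\frac{\theta}{1-\theta}\frac{1}{d\,D_{\mathrm{KL}}(\alpha\|q)},\ \frac{1}{1-\theta}\frac{1}{d\,D_{\mathrm{KL}}\big(\alpha\|e^{-d}(1-p)+(1-e^{-d})q\big)}\right\}k\log(n/k) \] and \[ m^{\mathrm{Ber}}_{\mathrm{COMP}}=\min_{\alpha,d}\max\left\{\frac{\theta}{1-\theta}\frac{1}{k\,D_{\mathrm{KL}}(\alpha d/k\,\|\,qd/k)},\ \frac{1}{1-\theta}\frac{1}{k\,D_{\mathrm{KL}}\big(\alpha d/k\,\|\,(e^{-d}(1-p)+(1-e^{-d})q)d/k\big)}\right\}k\log(n/k), \] both minima over $d\in(0,\infty)$ and $\alpha\in\big(q,\ e^{-d}(1-p)+(1-e^{-d})q\big)$ (with $d<k$). Then $m^{\mathrm{Ber}}_{\mathrm{COMP}}\ge m_{\mathrm{COMP}}$.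
   Context: $\log$ is the natural logarithm; $D_{\mathrm{KL}}(r\|s)=r\log(r/s)+(1-r)\log\frac{1-r}{1-s}$, extended by continuity at $r$ or $s\in\{0,1\}$. (These are the sufficient numbers of tests for noisy COMP under the constant-column design and under the Bernoulli design, respectively, in the noisy group testing model with false-positive probability $p$ and false-negative probability $q$.) *)

From HB Require Import structures.
From mathcomp Require Import all_boot all_order all_algebra.
From mathcomp Require Import all_classical all_reals all_analysis.
Set Implicit Arguments. Unset Strict Implicit. Unset Printing Implicit Defensive.
Import Order.TTheory GRing.Theory Num.Theory.
Local Open Scope classical_set_scope.
Local Open Scope ring_scope.

Section Defs.
Variable R : realType.

(* x log(x/y), extended by continuity: 0 if x = 0, +oo if x > 0 = y. *)
Definition xlogxy (x y : R) : \bar R :=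
  if x == 0 then 0%E else if y == 0 then +oo%E else (x * ln (x / y))%:E.

Definition DKL (r s : R) : \bar R := (xlogxy r s + xlogxy (1 - r) (1 - s))%E.

(* Reciprocal with the convention 1/(+oo) = 0 (and 1/(-oo) = 0, never used). *)
Definition recipE (x : \bar R) : R :=
  match x with EFin r => r^-1 | _ => 0 end.

Definition beta (p q d : R) : R := expR (- d) * (1 - p) + (1 - expR (- d)) * q.

Definition m_COMP (p q theta : R) (k n : nat) : R :=
  inf [set x : R | exists alpha d : R, 0 < d /\ q < alpha /\ alpha < beta p q d /\
        x = Num.max (theta / (1 - theta) * recipE (d%:E * DKL alpha q)%E)
                    (1 / (1 - theta) * recipE (d%:E * DKL alpha (beta p q d))%E)]
  * (k%:R * ln (n%:R / k%:R)).

Definition m_COMP_Ber (p q theta : R) (k n : nat) : R :=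
  inf [set x : R | exists alpha d : R, 0 < d /\ d < k%:R /\ q < alpha /\ alpha < beta p q d /\
        x = Num.max (theta / (1 - theta)
                       * recipE (k%:R%:E * DKL (alpha * d / k%:R) (q * d / k%:R))%E)
                    (1 / (1 - theta)
                       * recipE (k%:R%:E * DKL (alpha * d / k%:R) (beta p q d * d / k%:R))%E)]
  * (k%:R * ln (n%:R / k%:R)).

End Defs.

From mathcomp Require Import all_boot all_order all_algebra.
From mathcomp Require Import all_classical all_reals all_analysis.
From mathcomp Require Import ring lra.
Import Order.TTheory GRing.Theory Num.Theory.
Set Implicit Arguments. Unset Strict Implicit. Unset Printing Implicit Defensive.
Local Open Scope ring_scope.

(* Put r = d/k < 1.  Diluting both arguments by r contracts the binary KL
   divergence, D(r a || r b) <= r D(a || b): the first terms scale exactly,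
   and the log-sum inequality applied to 1 - r a = r (1 - a) + (1 - r) bounds
   the second.  Hence k D(a d/k || b d/k) <= d D(a || b), so at every
   admissible (alpha, d) with d < k each reciprocal term of the Bernoulli
   objective dominates the constant-column one, and the infimum over the
   smaller Bernoulli parameter range can only be larger. *)

Section KullbackLeibler.
Variable R : realType.
Implicit Types x y z r : R.

Lemma ln_lt_subr1 z : 0 < z -> z != 1 -> ln z < z - 1.
Proof.
move=> z0 z1; have /expR_gt1Dx : ln z != 0 by rewrite ln_eq0.
by rewrite lnK ?posrE //; lra.
Qed.

Lemma subr_lt_xlnxy x y : 0 < x -> 0 < y -> x != y -> x - y < x * ln (x / y).
Proof.
move=> x0 y0 xy.
have yx1 : y / x != 1 by apply: contra_neq xy => /divr1_eq ->.
have := ln_lt_subr1 (divr_gt0 y0 x0) yx1; rewrite -(ltr_pM2l x0).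
rewrite -[x / y]invf_div lnV ?posrE ?divr_gt0 //.
have -> : x * (y / x - 1) = y - x by field; rewrite gt_eqF.
lra.
Qed.

Lemma subr_le_xlnxy x y : 0 < x -> 0 < y -> x - y <= x * ln (x / y).
Proof.
move=> x0 y0; have [->|xy] := eqVneq x y; last exact/ltW/subr_lt_xlnxy.
by rewrite subrr divff ?gt_eqF // ln1 mulr0.
Qed.

Lemma log_sum_le x1 x2 y1 y2 : 0 < x1 -> 0 < x2 -> 0 < y1 -> 0 < y2 ->
  (x1 + x2) * ln ((x1 + x2) / (y1 + y2)) <= x1 * ln (x1 / y1) + x2 * ln (x2 / y2).
Proof.
move=> x10 x20 y10 y20.
have termwise t x y : 0 < t -> 0 < x -> 0 < y -> x - y * t <= x * (ln (x / y) - ln t).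
  move=> t0 x0 y0; rewrite -ln_div ?posrE ?divr_gt0 // -mulrA -invfM.
  exact/subr_le_xlnxy/mulr_gt0.
have t0 : 0 < (x1 + x2) / (y1 + y2) by rewrite divr_gt0 ?addr_gt0.
have := lerD (termwise _ _ _ t0 x10 y10) (termwise _ _ _ t0 x20 y20).
have -> : x1 - y1 * ((x1 + x2) / (y1 + y2)) + (x2 - y2 * ((x1 + x2) / (y1 + y2))) = 0.
  by field; rewrite gt_eqF ?addr_gt0.
lra.
Qed.

Lemma mulr_gt0_lt1 x y : 0 < x < 1 -> 0 < y < 1 -> 0 < x * y < 1.
Proof. by move=> /andP[x0 x1] /andP[y0 y1]; rewrite mulr_gt0 ?mulr_ilt1 ?ltW. Qed.

Lemma mulr_ge0_lt1 x y : 0 < x < 1 -> 0 <= y < 1 -> 0 <= x * y < 1.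
Proof. by move=> /andP[x0 x1] /andP[y0 y1]; rewrite mulr_ge0 ?mulr_ilt1 ?(ltW x0). Qed.

Definition kl x y := x * ln (x / y) + (1 - x) * ln ((1 - x) / (1 - y)).

Lemma kl_gt0 x y : 0 < x < 1 -> 0 < y < 1 -> x != y -> 0 < kl x y.
Proof.
move=> /andP[x0 x1] /andP[y0 y1] xy.
have := subr_lt_xlnxy x0 y0 xy.
have : 0 < 1 - x /\ 0 < 1 - y by rewrite !subr_gt0.
move=> [/subr_le_xlnxy /[apply]].
rewrite /kl; lra.
Qed.

Lemma kl_scale_le r x y : 0 < r < 1 -> 0 < x < 1 -> 0 < y < 1 ->
  kl (r * x) (r * y) <= r * kl x y.
Proof.
move=> /andP[r0 r1] /andP[x0 x1] /andP[y0 y1].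
have [r1' x1' y1'] : [/\ 0 < 1 - r, 0 < 1 - x & 0 < 1 - y] by rewrite !subr_gt0.
have := log_sum_le (mulr_gt0 r0 x1') r1' (mulr_gt0 r0 y1') r1'.
have -> : r * (1 - x) / (r * (1 - y)) = (1 - x) / (1 - y).
  by field; rewrite !gt_eqF.
rewrite divff ?gt_eqF // ln1 mulr0 addr0.
have -> : r * (1 - x) + (1 - r) = 1 - r * x by ring.
have -> : r * (1 - y) + (1 - r) = 1 - r * y by ring.
rewrite /kl; have -> : r * x / (r * y) = x / y by field; rewrite !gt_eqF.
lra.
Qed.

End KullbackLeibler.

Section ExtendedDivergence.
Variable R : realType.
Implicit Types r a b : R.

Lemma DKL_kl a b : 0 < a < 1 -> 0 < b < 1 -> DKL a b = (kl a b)%:E.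
Proof.
by move=> /andP[a0 a1] /andP[b0 b1]; rewrite /DKL /xlogxy !gt_eqF ?subr_gt0.
Qed.

Lemma DKL_x0 a : 0 < a -> DKL a 0 = +oo%E.
Proof.
move=> a0; rewrite /DKL /xlogxy gt_eqF // eqxx subr0 oner_eq0.
by case: ifP.
Qed.

Lemma DKL_gt0 a b : 0 < a < 1 -> 0 <= b < 1 -> a != b -> (0 < DKL a b)%E.
Proof.
move=> /andP[a0 a1] /andP[b0 b1] ab.
have [->|bn0] := eqVneq b 0; first by rewrite DKL_x0.
have b0' : 0 < b by rewrite lt_def bn0.
by rewrite DKL_kl ?a0 ?b0' // lte_fin kl_gt0 ?a0 ?b0'.
Qed.

Lemma DKL_scale_le r a b : 0 < r < 1 -> 0 < a < 1 -> 0 <= b < 1 ->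
  (DKL (r * a) (r * b) <= r%:E * DKL a b)%E.
Proof.
move=> /andP[r0 r1] /andP[a0 a1] /andP[b0 b1].
have [->|bn0] := eqVneq b 0.
  by rewrite mulr0 !DKL_x0 ?mulr_gt0 // gt0_muley ?lte_fin.
have b01 : 0 < b < 1 by rewrite lt_def bn0 b0 b1.
have [r01 a01] : 0 < r < 1 /\ 0 < a < 1 by rewrite r0 r1 a0 a1.
by rewrite !DKL_kl ?mulr_gt0_lt1 // -EFinM lee_fin kl_scale_le.
Qed.

Lemma recipE_ge0 (x : \bar R) : (0 <= x)%E -> 0 <= recipE x.
Proof. by case: x => //= r; rewrite lee_fin invr_ge0. Qed.

Lemma recipE_le (x y : \bar R) : (0 < x)%E -> (x <= y)%E -> recipE y <= recipE x.
Proof.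
case: x => [r||] //; last by case: y.
rewrite lte_fin => r0; case: y => [s||] //=; last by move=> _; rewrite invr_ge0 ltW.
by rewrite lee_fin => rs; rewrite lef_pV2 ?posrE // (lt_le_trans r0).
Qed.

Lemma recipE_DKL_dilute_le (k d a b : R) : 0 < d < k -> 0 < a < 1 -> 0 <= b < 1 -> a != b ->
  recipE (d%:E * DKL a b)%E <= recipE (k%:E * DKL (a * d / k) (b * d / k))%E.
Proof.
move=> /andP[d0 dk] a01 b01 ab; have k0 : 0 < k := lt_trans d0 dk.
set r := d / k; have r01 : 0 < r < 1 by rewrite divr_gt0 //= ltr_pdivrMr // mul1r.
have -> : a * d / k = r * a by rewrite /r; ring.
have -> : b * d / k = r * b by rewrite /r; ring.
have -> : d = k * r by rewrite /r mulrC divfK ?gt_eqF.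
apply: recipE_le; last first.
  rewrite EFinM -muleA; apply: lee_wpmul2l; first by rewrite lee_fin ltW.
  exact: DKL_scale_le.
apply: mule_gt0; first by rewrite lte_fin.
rewrite DKL_gt0 ?(mulr_gt0_lt1 r01) ?(mulr_ge0_lt1 r01) //.
by apply: contra_neq ab => /(mulfI (lt0r_neq0 (andP r01).1)).
Qed.

End ExtendedDivergence.

Section AdmissibleParameters.
Variable R : realType.
Implicit Types p q a d : R.

Lemma q_lt_beta_lt1 p q d : 0 <= p -> 0 <= q -> p + q < 1 -> 0 < d ->
  q < beta p q d < 1.
Proof.
move=> p0 q0 pq d0; rewrite /beta.
have := expR_gt0 (- d); have : expR (- d) < 1 by rewrite expR_lt1 oppr_lt0.
set e := expR (- d) => e1 e0.
by apply/andP; split; nra.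
Qed.

Lemma admissible_bounds p q a d : 0 <= p -> 0 <= q -> p + q < 1 ->
  0 < d -> q < a -> a < beta p q d ->
  [/\ 0 < a < 1, 0 <= q < 1, 0 <= beta p q d < 1, a != q & a != beta p q d].
Proof.
move=> p0 q0 pq d0 qa ab; have /andP[qb b1] := q_lt_beta_lt1 p0 q0 pq d0.
have a1 : a < 1 := lt_trans ab b1.
split; first by rewrite (le_lt_trans q0 qa) a1.
- by rewrite q0 (lt_trans qa a1).
- by rewrite (le_trans q0 (ltW qb)) b1.
- by rewrite gt_eqF.
- by rewrite lt_eqF.
Qed.

End AdmissibleParameters.

Lemma inf_le_inf (R : realType) (A B : set R) : has_lbound A -> (B !=set0)%classic ->
  (forall y, B y -> exists2 x, A x & x <= y) -> inf A <= inf B.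
Proof.
move=> lbA B0 AB; apply: lb_le_inf => // y /AB[x Ax xy].
exact: le_trans (ge_inf lbA Ax) xy.
Qed.

Theorem proposition2p15 (R : realType) (p q theta : R) (k n : nat) :
  0 <= p -> 0 <= q -> p + q < 1 -> 0 < theta -> theta < 1 ->
  (0 < k)%N -> (k < n)%N ->
  m_COMP p q theta k n <= m_COMP_Ber p q theta k n.
Proof.
move=> p0 q0 pq t0 t1 k0 kn.
have [c1 c2] : 0 <= theta / (1 - theta) /\ 0 <= 1 / (1 - theta).
  by split; apply: divr_ge0; lra.
rewrite /m_COMP /m_COMP_Ber; apply: ler_wpM2r.
  by rewrite mulr_ge0 ?ler0n // ln_ge0 // ler_pdivlMr ?ltr0n // mul1r ler_nat ltnW.
apply: inf_le_inf.
- exists 0 => _ [a [d [d0 [qa [ab ->]]]]].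
  have [a01 q01 _ aq _] := admissible_bounds p0 q0 pq d0 qa ab.
  rewrite le_max mulr_ge0 ?recipE_ge0 ?mule_ge0 ?lee_fin ?(ltW d0) //.
  exact/ltW/DKL_gt0.
- have d0 : 0 < 1 / 2 :> R by [].
  have d1 : 1 / 2 < k%:R :> R by apply: (@lt_le_trans _ _ 1); rewrite ?ler1n //; lra.
  have /andP[qb _] := q_lt_beta_lt1 p0 q0 pq d0.
  eexists; exists ((q + beta p q (1 / 2)) / 2), (1 / 2).
  by do 2!split=> //; split; [lra | split; [lra | reflexivity]].
- move=> _ [a [d [d0 [dk [qa [ab ->]]]]]].
  have [a01 q01 b01 aq ab'] := admissible_bounds p0 q0 pq d0 qa ab.
  eexists; first by exists a, d.
  by apply: le_max2; apply: ler_wpM2l => //; apply: recipE_DKL_dilute_le; rewrite ?d0.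
Qed.
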